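(* Let $G$ be a profinite group and let $\psi$ be an expansion map for $G$ with support $A$ and pointer $\chi_0$. Then for all $\sigma_1,\dots,\sigma_{\#A}\in G$, $$\phi_{A\setminus\{\chi_0\}}(\psi)\big([\sigma_1,[\sigma_2,[\dots,[\sigma_{\#A-1},\sigma_{\#A}]\dots]]]\big)=\sum_{f}\prod_{s=1}^{\#A}f(s)(\sigma_s),$$ where the sum runs over all bijections $f:\{1,\dots,\#A\}\to A$ with $f(\#A-1)=\chi_0$ or $f(\#A)=\chi_0$.
   Context: Let $A$ be a finite $\mathbb{F}_2$-linearly independent set of continuous homomorphisms $G\to\mathbb{F}_2$ with $\#A\geq2$, and $\chi_0\in A$. Let $W=\mathbb{F}_2^{A\setminus\{\chi_0\}}$ with basis $(e_\chi)_{\chi\in A\setminus\{\chi_0\}}$, and let $W$ act on the group algebra $\mathbb{F}_2[W]$ by multiplication by group elements, forming $\mathbb{F}_2[W]\rtimes W$. An expansion map for $G$ with support $A$ and pointer $\chi_0$ is a continuous homomorphism $\psi:G\to\mathbb{F}_2[W]\rtimes W$ such that for each $\chi\in A\setminus\{\chi_0\}$ the $\chi$-coordinate of the $W$-component of $\psi$ equals $\chi$, and $\varepsilon\circ(\text{first component of }\psi)=\chi_0$, where $\varepsilon$ is the augmentation of $\mathbb{F}_2[W]$ (this composite is the unique nontrivial character of $\mathbb{F}_2[W]\rtimes W$ trivial on $\{0\}\rtimes W$). Writing $t_\chi=1+[e_\chi]\in\mathbb{F}_2[W]$ and $t_B=\prod_{\chi\in B}t_\chi$ for $B\subseteq A\setminus\{\chi_0\}$,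 the $t_B$ form a basis of $\mathbb{F}_2[W]$, and $\phi_B(\psi):G\to\mathbb{F}_2$ denotes the coefficient of $t_B$ in the first component of $\psi$. Commutators are $[a,b]=aba^{-1}b^{-1}$. *)

From HB Require Import structures.
From mathcomp Require Import all_boot all_order fingroup perm all_algebra.
From mathcomp Require Import classical_sets topology.
Set Implicit Arguments. Unset Strict Implicit. Unset Printing Implicit Defensive.
Import GRing.Theory.
Local Open Scope classical_set_scope.
Local Open Scope ring_scope.

Definition is_profinite_group (G : topologicalType) (mul : G -> G -> G)
    (one : G) (inv : G -> G) : Prop :=
  [/\ (forall x y z, mul x (mul y z) = mul (mul x y) z),
      (forall x, mul one x = x) &
      (forall x, mul (inv x) x = one)] /\
  [/\ continuous (fun p : G * G => mul p.1 p.2),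
      continuous inv,
      compact [set: G],
      hausdorff_space G &
      totally_disconnected [set: G]].

Definition gcomm (G : Type) (mul : G -> G -> G) (inv : G -> G) (a b : G) : G :=
  mul (mul (mul a b) (inv a)) (inv b).

Fixpoint ncomm (G : Type) (mul : G -> G -> G) (inv : G -> G) (one : G)
    (s : seq G) : G :=
  match s with
  | [::] => one
  | [:: x] => x
  | x :: s' => gcomm mul inv x (ncomm mul inv one s')
  end.

(* continuous map into a finite discrete space: all fibres are open *)
Definition cont_to_discrete (G : topologicalType) (T : Type) (f : G -> T) :=
  forall y : T, open (f @^-1` [set y]).

Definition cont_hom_F2 (G : topologicalType) (mul : G -> G -> G)
    (chi : G -> 'F_2) : Prop :=
  (forall x y, chi (mul x y) = chi x + chi y) /\ cont_to_discrete chi.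

Definition F2_lin_indep (G : Type) (n : nat) (chi : 'I_n -> G -> 'F_2) :=
  forall c : 'I_n -> 'F_2,
    (forall x, \sum_(i < n) c i * chi i x = 0) -> forall i, c i = 0.

(* The family A is indexed by 'I_n; the pointer is i0.  A \ {chi_0} is
   indexed by Jidx i0. *)
Definition Jidx (n : nat) (i0 : 'I_n) := {j : 'I_n | j != i0}.

Definition Wsp (n : nat) (i0 : 'I_n) := {ffun Jidx i0 -> 'F_2}.

(* group algebra F_2[W], elements = functions W -> F_2 *)
Definition GA (n : nat) (i0 : 'I_n) := {ffun Wsp i0 -> 'F_2}.

Section GroupAlgebra.
Variables (n : nat) (i0 : 'I_n).

Definition evec (j : Jidx i0) : Wsp i0 := [ffun k => (k == j)%:R].

Definition gdelta (w : Wsp i0) : GA i0 := [ffun v : Wsp i0 => (v == w)%:R].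

Definition gmul (a b : GA i0) : GA i0 :=
  [ffun v : Wsp i0 => \sum_(u : Wsp i0) a u * b (v - u)].

Definition aug (a : GA i0) : 'F_2 := \sum_(w : Wsp i0) a w.

(* multiplication in the semidirect product F_2[W] x| W, W acting on
   F_2[W] by multiplication by group elements *)
Definition sdmul (p q : GA i0 * Wsp i0) : GA i0 * Wsp i0 :=
  (p.1 + gmul (gdelta p.2) q.1, p.2 + q.2).

Definition tvec (j : Jidx i0) : GA i0 := gdelta 0 + gdelta (evec j).
Definition tB (B : {set Jidx i0}) : GA i0 :=
  \big[gmul/gdelta 0]_(j in B) tvec j.

(* coefficient of t_B in a, w.r.t. the basis (t_B)_B: the value at B of
   the (unique) coefficient family c with a = sum_B c_B t_B *)
Definition tcoef (a : GA i0) (B : {set Jidx i0}) : 'F_2 :=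
  match [pick c : {ffun {set Jidx i0} -> 'F_2} |
           a == \sum_(C : {set Jidx i0}) [ffun w => c C * tB C w]] with
  | Some c => c B
  | None => 0
  end.

End GroupAlgebra.

Definition expansion_map (G : topologicalType) (mul : G -> G -> G)
    (n : nat) (chi : 'I_n -> G -> 'F_2) (i0 : 'I_n)
    (psi : G -> GA i0 * Wsp i0) : Prop :=
  [/\ (forall x y, psi (mul x y) = sdmul (psi x) (psi y)),
      cont_to_discrete psi,
      (forall (j : Jidx i0) x, (psi x).2 j = chi (val j) x) &
      (forall x, aug (psi x).1 = chi i0 x)].

Definition phiB (G : Type) (n : nat) (i0 : 'I_n)
    (psi : G -> GA i0 * Wsp i0) (B : {set Jidx i0}) (x : G) : 'F_2 :=
  tcoef (psi x).1 B.

From HB Require Import structures.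
From mathcomp Require Import all_boot all_order fingroup perm all_algebra.
Set Implicit Arguments. Unset Strict Implicit. Unset Printing Implicit Defensive.
Import GRing.Theory.
Local Open Scope ring_scope.

(* Write psi x = (a_x, w_x).  In F_2[W] x| W a commutator has trivial W-component and
   psi [x, y] = (D_{w_y} a_x + D_{w_x} a_y, 0), where D_u b = b + b(. + u) is a finite
   difference on W.  Hence the nested commutator of sigma_1, ..., sigma_n is sent to the
   (n-1)-fold finite difference of a_{sigma_(n-1)} along the w_{sigma_s}, s <> n-1, plus
   the one of a_{sigma_n} along the w_{sigma_s}, s <> n.  The coefficient of t_{A \ chi_0}
   is the value at the all-ones vector, since t_B v = 1 exactly when supp v lies in B.
   Writing b = sum_y b(y) [y] with [y](z) = prod_chi (1 + y_chi + z_chi), an (n-1)-fold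
   difference of a product of n-1 affine forms is aug b times the permanent of the
   coordinates of the directions (over F_2 the inclusion-exclusion signs disappear).
   As aug a_sigma = chi_0 sigma and the chi-coordinate of w_sigma is chi sigma, the two
   permanents are the sums over the bijections f with f (n-1) = chi_0, resp. f n = chi_0. *)

Fact pchar_F2 : 2%N \in [pchar 'F_2]. Proof. exact: pchar_Fp. Qed.

Lemma F2_cases (a : 'F_2) : a = 0 \/ a = 1.
Proof. by case: a => [[|[|]]] //= ?; [left | right]; apply/val_inj. Qed.

Lemma F2_eqE (a b : 'F_2) : (a == b)%:R = 1 + a + b.
Proof. by case: (F2_cases a) => ->; case: (F2_cases b) => ->; apply/val_inj. Qed.

Lemma F2_neq0E (a : 'F_2) : (a != 0)%:R = a.
Proof. by case: (F2_cases a) => ->; apply/val_inj. Qed.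

Lemma ffun_addrr_F2 (T : finType) (f : {ffun T -> 'F_2}) : f + f = 0.
Proof. by apply/ffunP => x; rewrite !ffunE (addrr_pchar2 pchar_F2). Qed.

Lemma ffun_oppr_F2 (T : finType) (f : {ffun T -> 'F_2}) : - f = f.
Proof. by apply/ffunP => x; rewrite !ffunE (oppr_pchar2 pchar_F2). Qed.

Lemma ffun_addrK_F2 (T : finType) (f g : {ffun T -> 'F_2}) : f + g + g = f.
Proof. by rewrite -addrA ffun_addrr_F2 addr0. Qed.

Lemma prod_natr_bool (R : comPzSemiRingType) (T : finType) (P : pred T) :
  \prod_(j : T) ((P j)%:R : R) = [forall j, P j]%:R.
Proof.
case: (boolP [forall j, P j]) => [/forallP allP | ].
  by apply: big1 => j _; rewrite allP.
by rewrite negb_forall => /existsP [j Pj]; rewrite (bigD1 j) //= (negbTE Pj) mul0r.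
Qed.

Lemma sum_natr_eq (R : pzSemiRingType) (T : finType) (w : T) (F : T -> R) :
  \sum_(u : T) (u == w)%:R * F u = F w.
Proof.
by rewrite (bigD1 w) //= eqxx mul1r big1 ?addr0 // => u /negbTE ->; rewrite mul0r.
Qed.

Lemma sum_subset_setU1 (R : nmodType) (I : finType) (F : {set I} -> R)
    (q : I) (P : {set I}) : q \notin P ->
  \sum_(S : {set I} | S \subset q |: P) F S =
  \sum_(S : {set I} | S \subset P) F S + \sum_(S : {set I} | S \subset P) F (q |: S).
Proof.
move=> qP; have subP_q (S : {set I}) : S \subset P -> q \notin S.
  by move=> SP; apply: contra qP => /(subsetP SP).
rewrite (bigID (fun S : {set I} => q \in S)) /= addrC; congr (_ + _).
  apply: eq_bigl => S; apply/andP/idP => [[SqP qS] | SP].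
    apply/subsetP => x xS; case/setU1P: (subsetP SqP x xS) => // xq.
    by rewrite -xq xS in qS.
  by rewrite subP_q // (subset_trans SP (subsetU1 _ _)).
rewrite (reindex_onto (fun S : {set I} => q |: S) (fun S => S :\ q)) /=; last first.
  by move=> S /andP [_ qS]; rewrite setD1K.
apply: eq_bigl => S; rewrite setU11 andbT; apply/andP/idP => [[qSP /eqP <-] | SP].
  by rewrite subDset.
by rewrite setUS //= setU1K ?subP_q.
Qed.

Lemma subsetU1_notin (I : finType) (A B : {set I}) (q : I) :
  q \notin A -> (A \subset q |: B) = (A \subset B).
Proof.
move=> qA; apply/idP/idP => [/subsetP AqB | AB]; last exact: subset_trans AB (subsetU1 _ _).
apply/subsetP => x xA; case/setU1P: (AqB x xA) => // xq.
by rewrite -xq xA in qA.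
Qed.

Lemma sum_subset_supset_F2 (I : finType) (T U : {set I}) :
  \sum_(S : {set I} | S \subset U) ((T \subset S)%:R : 'F_2) = (T == U)%:R.
Proof.
have [TU | nTU] := boolP (T \subset U); last first.
  rewrite big1 => [|S SU]; last first.
    by case: (boolP (T \subset S)) => // TS; case/negP: nTU; exact: subset_trans TS SU.
  by case: eqP nTU => // ->; rewrite subxx.
have [<- | neTU] := eqVneq T U.
  rewrite (bigD1 T) //= subxx big1 ?addr0 // => S /andP [ST neST].
  by rewrite eqEsubset ST /= in neST; rewrite (negbTE neST).
have [q qU qT] : exists2 q, q \in U & q \notin T.
  by apply/subsetPn; rewrite eqEsubset TU in neTU.
rewrite -(setD1K qU) sum_subset_setU1 ?setD11 //.
under [in X in _ + X]eq_bigr => S _ do rewrite subsetU1_notin //.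
by rewrite (addrr_pchar2 pchar_F2).
Qed.

Lemma sum_option (R : nmodType) (T : finType) (F : option T -> R) :
  \sum_(o : option T) F o = F None + \sum_(s : T) F (Some s).
Proof.
rewrite (bigD1 None) //= (reindex_omap Some idfun) //=; last by case.
by congr (_ + _); apply: eq_bigl => s; rewrite eqxx.
Qed.

Definition some_range (J T : finType) (h : {ffun J -> option T}) : {set T} :=
  [set s | [exists j, h j == Some s]].

Lemma prod_addr_sum_expand (R : comPzSemiRingType) (J T : finType)
    (d : J -> R) (M : T -> J -> R) (S : {set T}) :
  \prod_j (d j + \sum_(s in S) M s j) =
  \sum_(h : {ffun J -> option T})
     (some_range h \subset S)%:R * \prod_j oapp (M^~ j) (d j) (h j).
Proof.
pose inS (o : option T) := oapp (mem S) true o.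
have factorE j : d j + \sum_(s in S) M s j =
                 \sum_(o : option T) (inS o)%:R * oapp (M^~ j) (d j) o.
  rewrite sum_option /= mul1r big_mkcond /=; congr (_ + _).
  by apply: eq_bigr => s _; case: (s \in S); rewrite ?mul1r ?mul0r.
rewrite (eq_bigr _ (fun j _ => factorE j)) bigA_distr_bigA /=.
apply: eq_bigr => h _; rewrite big_split /= prod_natr_bool; congr ((nat_of_bool _)%:R * _).
apply/forallP/subsetP => [inSh s | rangeS j].
  by rewrite inE => /existsP [j /eqP hj]; have := inSh j; rewrite hj.
case hj: (h j) => [s|] //=; apply: rangeS.
by rewrite inE; apply/existsP; exists j; rewrite hj.
Qed.

Section PermanentOfMinor.
Variables (T : finType) (i0 : T).

Definition perm_choice (f : {perm T}) : {ffun {i : T | i != i0} -> option T} :=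
  [ffun j => Some (f (val j))].

Lemma some_range_perm_choice f : some_range (perm_choice f) = [set~ f i0].
Proof.
apply/setP => s; rewrite !inE; apply/existsP/idP => [[j] | s_neq].
  by rewrite ffunE => /eqP [<-]; rewrite (inj_eq perm_inj); exact: valP j.
have fVs_neq : (f^-1 s)%g != i0 by apply: contra s_neq => /eqP <-; rewrite permKV.
by exists (exist (fun i => i != i0) _ fVs_neq); rewrite ffunE /= permKV.
Qed.

Lemma some_range_setC1 h p : some_range h = [set~ p] ->
  exists2 f : {perm T}, f i0 = p & perm_choice f = h.
Proof.
move=> range_h.
(* g extends h by i0 |-> p; it is onto, hence a permutation *)
pose g i := if insub i is Some j then odflt p (h j) else p.
have g_i0 : g i0 = p by rewrite /g insubF ?eqxx.
have g_val j : g (val j) = odflt p (h j) by rewrite /g valK.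
have g_onto s : s \in image g T.
  have [-> | s_neq] := eqVneq s p; first by rewrite -g_i0 image_f.
  have : s \in some_range h by rewrite range_h !inE.
  by rewrite inE => /existsP [j /eqP hj]; apply/imageP; exists (val j); rewrite ?g_val ?hj.
have /image_injP g_inj : #|image g T| == #|T|.
  by rewrite eqn_leq leq_image_card /=; apply/subset_leq_card/subsetP => s _.
have {}g_inj : injective g by move=> x y; apply: g_inj.
exists (perm g_inj); first by rewrite permE.
apply/ffunP => j; rewrite !ffunE permE g_val.
case hj: (h j) => [s|] //=; have := g_val j; rewrite hj -g_i0 => /g_inj j_i0.
by have := valP j; rewrite j_i0 eqxx.
Qed.

Lemma sum_subsets_prod_affine_F2 (d : {i : T | i != i0} -> 'F_2)
    (M : T -> {i : T | i != i0} -> 'F_2) (p : T) :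
  \sum_(S : {set T} | S \subset [set~ p]) \prod_j (d j + \sum_(s in S) M s j) =
  \sum_(f : {perm T} | f i0 == p) \prod_j M (f (val j)) j.
Proof.
under eq_bigr => S _ do rewrite prod_addr_sum_expand.
rewrite exchange_big /=.
under eq_bigr => h _ do rewrite -mulr_suml sum_subset_supset_F2.
rewrite (bigID (fun h => some_range h == [set~ p])) /= [X in _ + X]big1; last first.
  by move=> h /negbTE ->; rewrite mul0r.
have perm_choices h : (some_range h == [set~ p]) =
                      (h \in perm_choice @: [set f : {perm T} | f i0 == p]).
  apply/eqP/imsetP => [/some_range_setC1 [f f_i0 <-] | [f]].
    by exists f; rewrite ?inE ?f_i0.
  by rewrite inE => /eqP <- ->; exact: some_range_perm_choice.
rewrite addr0; under eq_bigl => h do rewrite perm_choices.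
rewrite big_imset /=; last first.
  move=> f g; rewrite !inE => /eqP f_i0 /eqP g_i0 fg; apply/permP => i.
  have [-> | i_neq] := eqVneq i i0; first by rewrite f_i0 g_i0.
  by move/ffunP: fg => /(_ (Sub i i_neq)); rewrite !ffunE => -[].
apply: eq_big => [f | f]; first by rewrite inE.
rewrite inE => /eqP f_i0; rewrite some_range_perm_choice f_i0 eqxx mul1r.
by apply: eq_bigr => j _; rewrite ffunE.
Qed.

End PermanentOfMinor.

Section GroupAlgebra.
Variables (n : nat) (i0 : 'I_n).
Implicit Types (v w z : Wsp i0) (a b : GA i0).

Definition translate w b : GA i0 := [ffun v : Wsp i0 => b (v + w)].

Lemma translate0 b : translate 0 b = b.
Proof. by apply/ffunP => v; rewrite ffunE addr0. Qed.

Lemma translateD u w b : translate u (translate w b) = translate (u + w) b.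
Proof. by apply/ffunP => v; rewrite !ffunE addrA. Qed.

Lemma gmul_gdelta w b : gmul (gdelta w) b = translate w b.
Proof.
apply/ffunP => v; rewrite !ffunE; under eq_bigr => u _ do rewrite ffunE.
by rewrite sum_natr_eq ffun_oppr_F2.
Qed.

Lemma sdmulE (x y : GA i0 * Wsp i0) :
  sdmul x y = (x.1 + translate x.2 y.1, x.2 + y.2).
Proof. by rewrite /sdmul gmul_gdelta. Qed.

Lemma gmul_tvec j b : gmul (tvec j) b = b + translate (evec j) b.
Proof.
have gmulDl : gmul (gdelta 0 + gdelta (evec j)) b =
              gmul (gdelta 0) b + gmul (gdelta (evec j)) b.
  by apply/ffunP => v; rewrite !ffunE -big_split; apply: eq_bigr => u _; rewrite ffunE mulrDl.
by rewrite /tvec gmulDl !gmul_gdelta translate0.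
Qed.

Definition suppW w : {set Jidx i0} := [set j | w j != 0].

Lemma suppW_eq0 w : (suppW w == set0) = (w == 0).
Proof.
apply/eqP/eqP => [supp0 | ->]; last by apply/setP => j; rewrite !inE ffunE eqxx.
apply/ffunP => j; rewrite ffunE.
by have := in_set0 j; rewrite -supp0 inE => /negbFE /eqP.
Qed.

Lemma tB_seqE (s : seq (Jidx i0)) v : uniq s ->
  (\big[@gmul _ i0/gdelta 0]_(j <- s) tvec j) v = (suppW v \subset [set:: s])%:R.
Proof.
elim: s v => [|j s IHs] v /=.
  by rewrite big_nil set_nil subset0 suppW_eq0 ffunE.
case/andP => j_s uniq_s; rewrite big_cons gmul_tvec ffunE [translate _ _ _]ffunE !IHs //.
have j_s' : j \notin [set:: s] by rewrite inE.
have supp_notin u : j \in suppW u -> (suppW u \subset [set:: s]) = false.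
  by move=> ju; apply: contraNF j_s' => /subsetP; apply.
have supp_shift : suppW (v + evec j) :\ j = suppW v :\ j.
  by apply/setP => k; rewrite !inE !ffunE; case: eqP => //= _; rewrite addr0.
have vej : (v + evec j) j = v j + 1 by rewrite !ffunE eqxx.
rewrite set_cons; case: (F2_cases (v j)) => vj.
  rewrite (supp_notin (v + evec j)) ?inE ?vej ?vj // addr0.
  by rewrite subsetU1_notin // inE vj.
rewrite supp_notin ?inE ?vj // add0r -(subsetU1_notin _ (q := j)); last first.
  by rewrite inE vej vj (addrr_pchar2 pchar_F2) eqxx.
by rewrite -!subDset supp_shift.
Qed.

Lemma tBE C v : tB C v = (suppW v \subset C)%:R.
Proof.
rewrite /tB -big_filter tB_seqE ?filter_uniq ?index_enum_uniq //.
suff -> : [set:: [seq j <- index_enum (Jidx i0) | j \in C]] = C by [].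
by apply/setP => j; rewrite inE mem_filter mem_index_enum andbT.
Qed.

Lemma tcoef_setT a : tcoef a [set: Jidx i0] = a [ffun => 1].
Proof.
pose ind (S : {set Jidx i0}) : Wsp i0 := [ffun j => (j \in S)%:R].
(* Moebius inversion over subsets, in characteristic 2 *)
pose c := [ffun C : {set Jidx i0} => \sum_(S : {set Jidx i0} | C \subset S) a (ind S)].
have a_tB : a = \sum_C [ffun w => c C * tB C w].
  apply/ffunP => v; rewrite sum_ffunE.
  under eq_bigr => C _ do rewrite !ffunE tBE mulr_suml.
  rewrite (exchange_big_dep xpredT) //=.
  under eq_bigr => S _ do rewrite -mulr_sumr sum_subset_supset_F2.
  rewrite (bigD1 (suppW v)) //= eqxx mulr1 big1 ?addr0 => [|S]; last first.
    by rewrite eq_sym => /negbTE ->; rewrite mulr0.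
  suff -> : ind (suppW v) = v by [].
  by apply/ffunP => j; rewrite !ffunE inE F2_neq0E.
rewrite /tcoef; case: pickP => [c' /eqP a_c' | no_c].
  2: by have := no_c c; rewrite -a_tB eqxx.
rewrite a_c' sum_ffunE (bigD1 [set: Jidx i0]) //= ffunE tBE subsetT mulr1.
rewrite big1 ?addr0 // => C C_neq; rewrite ffunE tBE.
suff -> : suppW [ffun => 1] = [set: Jidx i0] by rewrite subTset (negbTE C_neq) mulr0.
by apply/setP => j; rewrite !inE ffunE.
Qed.

Definition fdiff w b : GA i0 := b + translate w b.

Lemma fdiff0 b : fdiff 0 b = 0.
Proof. by rewrite /fdiff translate0 ffun_addrr_F2. Qed.

Lemma fdiffD w a b : fdiff w (a + b) = fdiff w a + fdiff w b.
Proof.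
rewrite /fdiff; suff -> : translate w (a + b) = translate w a + translate w b.
  by rewrite addrACA.
by apply/ffunP => v; rewrite !ffunE.
Qed.

Definition fdiffs (I : finType) (ws : I -> Wsp i0) (P : {set I}) b : GA i0 :=
  [ffun z : Wsp i0 => \sum_(S : {set I} | S \subset P) b (z + \sum_(s in S) ws s)].

Lemma fdiffs_set0 (I : finType) (ws : I -> Wsp i0) b : fdiffs ws set0 b = b.
Proof.
apply/ffunP => z; rewrite ffunE (eq_bigl (pred1 set0)) => [|S]; last by rewrite subset0.
by rewrite big_pred1_eq big_set0 addr0.
Qed.

Lemma fdiff_fdiffs (I : finType) (ws : I -> Wsp i0) (P : {set I}) b q :
  q \notin P -> fdiff (ws q) (fdiffs ws P b) = fdiffs ws (q |: P) b.
Proof.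
move=> qP; apply/ffunP => z; rewrite !ffunE sum_subset_setU1 //; congr (_ + _).
apply: eq_bigr => S SP; rewrite big_setU1 /= ?addrA //.
by apply: contra qP => /(subsetP SP).
Qed.

Lemma fdiffs_setC1E (ws : 'I_n -> Wsp i0) b p z :
  fdiffs ws [set~ p] b z =
  aug b * \sum_(f : 'S_n | f i0 == p) \prod_(j : Jidx i0) ws (f (val j)) j.
Proof.
(* expand b over the group basis: [y] (z + u) = prod_j (1 + y j + z j + u j) *)
have b_delta u : b (z + u) = \sum_y b y * \prod_(j : Jidx i0) ((1 + y j + z j) + u j).
  rewrite -[LHS](sum_natr_eq (z + u) b); apply: eq_bigr => y _; rewrite mulrC.
  congr (_ * _); rewrite (eq_bigr (fun j => (y j == (z + u) j)%:R)); last first.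
    by move=> j _; rewrite F2_eqE ffunE addrA.
  rewrite prod_natr_bool; congr (nat_of_bool _)%:R.
  by apply/eqP/forallP => [-> // | yzu]; apply/ffunP => j; apply/eqP.
rewrite ffunE (eq_bigr _ (fun S _ => b_delta _)) exchange_big /=.
rewrite /aug mulr_suml; apply: eq_bigr => y _; rewrite -mulr_sumr; congr (_ * _).
rewrite -(sum_subsets_prod_affine_F2 (fun j => 1 + y j + z j) (fun s j => ws s j)).
by apply: eq_bigr => S _; apply: eq_bigr => j _; rewrite sum_ffunE.
Qed.

End GroupAlgebra.

Lemma ncomm_cons (G : Type) (mul : G -> G -> G) (inv : G -> G) (one : G)
    (x : G) (s : seq G) :
  (0 < size s)%N -> ncomm mul inv one (x :: s) = gcomm mul inv x (ncomm mul inv one s).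
Proof. by case: s. Qed.

Section SemidirectHom.
Variables (G : Type) (mul : G -> G -> G) (one : G) (inv : G -> G).
Hypotheses (mul1g : forall x, mul one x = x) (mulVg : forall x, mul (inv x) x = one).
Variables (n : nat) (i0 : 'I_n) (psi : G -> GA i0 * Wsp i0).
Hypothesis psiM : forall x y, psi (mul x y) = sdmul (psi x) (psi y).

Lemma psi1 : psi one = (0, 0).
Proof.
have := psiM one one; rewrite mul1g sdmulE; case: (psi one) => a w /= [a_eq w_eq].
have w0 : w = 0 by rewrite w_eq ffun_addrr_F2.
by rewrite w0 a_eq w0 translate0 ffun_addrr_F2.
Qed.

Lemma psiV x : psi (inv x) = (translate (psi x).2 (psi x).1, (psi x).2).
Proof.
have := psiM (inv x) x; rewrite mulVg psi1 sdmulE.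
case: (psi (inv x)) => b v; case: (psi x) => a w /= [b_eq v_eq].
have vw : v = w by rewrite -[v](ffun_addrK_F2 _ w) -v_eq add0r.
by rewrite -vw -[b](ffun_addrK_F2 _ (translate v a)) -b_eq add0r.
Qed.

Lemma psi_gcomm x y :
  psi (gcomm mul inv x y) = (fdiff (psi y).2 (psi x).1 + fdiff (psi x).2 (psi y).1, 0).
Proof.
rewrite /gcomm !psiM !psiV; case: (psi x) => a w; case: (psi y) => b v.
rewrite !sdmulE /= !translateD.
have wvw : w + v + w = v by rewrite addrAC ffun_addrr_F2 add0r.
rewrite wvw ffun_addrr_F2 translate0 /fdiff; congr pair.
rewrite -!addrA; congr (_ + _); rewrite addrCA; congr (_ + _); exact: addrC.
Qed.

Variables (I : finType) (sigma : I -> G).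

Lemma psi_ncomm (r : seq I) (p q : I) : uniq (r ++ [:: p; q]) ->
  psi (ncomm mul inv one [seq sigma s | s <- r ++ [:: p; q]]) =
  (fdiffs (fun s => (psi (sigma s)).2) [set:: q :: r] (psi (sigma p)).1 +
   fdiffs (fun s => (psi (sigma s)).2) [set:: p :: r] (psi (sigma q)).1, 0).
Proof.
elim: r => [_ | x r IHr].
  by rewrite /= psi_gcomm !set_cons set_nil -!fdiff_fdiffs ?inE // !fdiffs_set0.
rewrite cat_cons cons_uniq mem_cat !inE negb_or => /andP [/andP [x_r /norP [x_p x_q]] uniq_r].
rewrite ncomm_cons ?size_map ?size_cat ?addn2 // psi_gcomm IHr // fdiff0 add0r fdiffD.
have set_cons2 y : [set:: [:: y, x & r]] = x |: [set:: y :: r].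
  by rewrite !set_cons setUCA.
by rewrite !set_cons2 -!fdiff_fdiffs // !set_cons !inE !negb_or ?x_r ?x_p ?x_q.
Qed.

End SemidirectHom.

Lemma enum_ord_last2 n : (1 < n)%N ->
  exists (r : seq 'I_n) (p q : 'I_n),
    [/\ enum 'I_n = r ++ [:: p; q], val p = n.-2 & val q = n.-1].
Proof.
case: n => [|[|n]] // _; rewrite !enum_ordSr map_rcons -map_comp -!cats1 -catA.
pose w m := @widen_ord m m.+1 (leqnSn m).
by exists [seq w n.+1 (w n i) | i <- enum 'I_n], (w n.+1 ord_max), ord_max.
Qed.

Lemma set_cons_setC1 (T : finType) (p : T) (s : seq T) :
  uniq (p :: s) -> (forall i, i \in p :: s) -> [set:: s] = [set~ p].
Proof.
case/andP => p_s _ mem_ps; apply/setP => i; rewrite !inE.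
by have [-> | i_p] := eqVneq i p; [exact: negbTE | have := mem_ps i; rewrite inE (negbTE i_p)].
Qed.

Lemma enum_cat2_setC1 (T : finType) (r : seq T) (p q : T) :
  enum T = r ++ [:: p; q] ->
  [/\ p != q, [set:: q :: r] = [set~ p] & [set:: p :: r] = [set~ q]].
Proof.
move=> enumE; have mem_pqr i : i \in p :: q :: r.
  by rewrite -[p :: q :: r]/([:: p; q] ++ r) mem_cat orbC -mem_cat -enumE mem_enum.
have /and3P [p_qr q_r uniq_r] : uniq (p :: q :: r).
  by rewrite -[p :: q :: r]/([:: p; q] ++ r) uniq_catC -enumE enum_uniq.
have /norP [p_q p_r] : ~~ ((p == q) || (p \in r)) by rewrite -in_cons.
split=> //; first by apply: set_cons_setC1; rewrite //= p_qr q_r.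
apply: set_cons_setC1 => [|i]; first by rewrite /= inE negb_or eq_sym p_q p_r q_r.
by have := mem_pqr i; rewrite !inE orbCA.
Qed.

Lemma sum_perm_preimage_pair (R : comPzSemiRingType) (T : finType)
    (F : T -> T -> R) (i0 p q : T) : p != q ->
  \sum_(f : {perm T} | (f p == i0) || (f q == i0)) \prod_s F (f s) s =
  \sum_(g : {perm T} | g i0 == p) \prod_i F i (g i) +
  \sum_(g : {perm T} | g i0 == q) \prod_i F i (g i).
Proof.
move=> p_q; rewrite (reindex_inj (@invg_inj _)) (bigID (fun g : {perm T} => g i0 == p)) /=.
have preimE (g : {perm T}) (t : T) : ((g^-1)%g t == i0) = (g i0 == t).
  by rewrite -(inj_eq (@perm_inj _ g)) permKV eq_sym.
have prodE (g : {perm T}) : \prod_s F ((g^-1)%g s) s = \prod_i F i (g i).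
  by rewrite (reindex_inj (@perm_inj _ g)); apply: eq_bigr => i _; rewrite permK.
congr (_ + _); apply: eq_big => [g | g _]; rewrite ?prodE ?preimE //.
  by case: (g i0 == p); rewrite ?andbF ?andbT ?orbT.
by case: eqVneq => [-> | _]; rewrite ?eqxx ?(negbTE p_q) ?andbT.
Qed.

Section ExpansionMap.
Variables (G : Type) (n : nat) (chi : 'I_n -> G -> 'F_2) (i0 : 'I_n).
Variable psi : G -> GA i0 * Wsp i0.
Hypotheses (psi_W : forall (j : Jidx i0) x, (psi x).2 j = chi (val j) x)
           (psi_aug : forall x, aug (psi x).1 = chi i0 x).
Variable sigma : 'I_n -> G.

Lemma fdiffs_expansion_setC1 p z :
  fdiffs (fun s => (psi (sigma s)).2) [set~ p] (psi (sigma p)).1 z =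
  \sum_(f : 'S_n | f i0 == p) \prod_(i < n) chi i (sigma (f i)).
Proof.
rewrite fdiffs_setC1E psi_aug mulr_sumr; apply: eq_bigr => f /eqP f_i0.
rewrite (bigD1 i0) //= f_i0; congr (_ * _).
by rewrite (big_sub (predC1 i0)); apply: eq_bigr => j _; rewrite psi_W.
Qed.

End ExpansionMap.

From mathcomp Require Import classical_sets topology.
Local Open Scope classical_set_scope.
Local Open Scope ring_scope.

Theorem lemma3p22 (G : topologicalType) (mul : G -> G -> G) (one : G)
    (inv : G -> G) (HG : is_profinite_group mul one inv)
    (n : nat) (chi : 'I_n -> G -> 'F_2) (i0 : 'I_n)
    (Hn : (2 <= n)%N)
    (Hchi : forall i, cont_hom_F2 mul (chi i))
    (Hind : F2_lin_indep chi)
    (psi : G -> GA i0 * Wsp i0) (Hpsi : expansion_map mul chi psi)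
    (sigma : 'I_n -> G) :
  phiB psi [set: Jidx i0] (ncomm mul inv one [seq sigma s | s <- enum 'I_n]) =
  \sum_(f : 'S_n | [exists s : 'I_n,
                      ((val s == n.-2) || (val s == n.-1)) && (f s == i0)])
     \prod_(s < n) chi (f s) (sigma s).
Proof.
case: HG => [[_ mul1g mulVg] _]; case: Hpsi => psiM _ psi_W psi_aug.
have [r [p [q [enumE val_p val_q]]]] := enum_ord_last2 Hn.
have [p_q setC1_p setC1_q] := enum_cat2_setC1 enumE.
have uniq_rpq : uniq (r ++ [:: p; q]) by rewrite -enumE enum_uniq.
rewrite /phiB [in LHS]enumE (psi_ncomm mul1g mulVg psiM _ uniq_rpq) [(_, _).1]/=.
rewrite tcoef_setT [in LHS]ffunE setC1_p setC1_q !(fdiffs_expansion_setC1 psi_W psi_aug).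
rewrite -(sum_perm_preimage_pair (fun i s => chi i (sigma s))) //.
apply: eq_bigl => f; rewrite -val_p -val_q.
apply/orP/existsP => [[f_p | f_q] | [s /andP [/orP [] /eqP/val_inj -> f_s]]].
- by exists p; rewrite eqxx.
- by exists q; rewrite eqxx orbT.
- by left.
- by right.
Qed.
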